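(* Let $A$ be a set of regular cardinals and let $\lambda\in\operatorname{spec}(A)$. Then either $\lambda\leq\operatorname{cf}(\prod A/J_{\mathrm{bd}})$, or $\lambda\in\operatorname{spec}(\bar A)$ for some proper initial segment $\bar A$ of $A$. In particular, if $\lambda\in\operatorname{spec}^*(A)$, then $\lambda\leq\operatorname{cf}(\prod A/J_{\mathrm{bd}})$.
   Context: $\prod A$ is the set of functions $f$ on $A$ with $f(a)\in a$, ordered pointwise. $J_{\mathrm{bd}}$ is the ideal of bounded subsets of $A$; $\operatorname{cf}(\prod A/J_{\mathrm{bd}})$ is the least size of a family $\mathcal{C}\subseteq\prod A$ such that every $h\in\prod A$ satisfies $h<f$ modulo $J_{\mathrm{bd}}$ (i.e., $\{a:h(a)\geq f(a)\}\in J_{\mathrm{bd}}$) for some $f\in\mathcal{C}$. $\operatorname{spec}(B)$, for a set $B$ of regular cardinals, is the set of regular $\kappa$ for which some $\mathcal{F}\subseteq\prod B$ of size $\kappa$ has every $\kappa$-sized subset unbounded in $(\prod B,<)$ (equivalently, $(\prod B,<)\geq_T\kappa$ in the Tukey order). For $\mathcal{G}\subseteq\prod A$, $\operatorname{ub}(\mathcal{G})$ is the set of $a\in A$ with $\{f(a):f\in\mathcal{G}\}$ unbounded in $a$. $\operatorname{spec}^*(A)$ is the set of regular $\lambda$ such that there is $\mathcal{F}\subseteq\prod A$ of size $\lambda$ with $\operatorname{ub}(\mathcal{F}_0)$ unbounded in $\sup(A)$ for every $\lambda$-sized $\mathcal{F}_0\subseteq\mathcal{F}$. *)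

(* Cardinals are modelled as well-ordered types (initial ordinals);
   cardinal comparison is via injections. *)
From Stdlib Require Import Classical.

Set Implicit Arguments.

Definition injective_map (X Y : Type) (f : X -> Y) : Prop :=
  forall x y, f x = f y -> x = y.

Definition inj_le (X Y : Type) : Prop := exists f : X -> Y, injective_map f.

Definition well_order (X : Type) (lt : X -> X -> Prop) : Prop :=
  well_founded lt /\
  (forall x y z, lt x y -> lt y z -> lt x z) /\
  (forall x y, lt x y \/ x = y \/ lt y x).

Definition is_cardinal (X : Type) (lt : X -> X -> Prop) : Prop :=
  well_order lt /\ forall x : X, ~ inj_le X {y : X | lt y x}.

Definition is_regular (X : Type) (lt : X -> X -> Prop) : Prop :=
  is_cardinal lt /\ inj_le nat X /\
  forall S : X -> Prop, (forall x, exists y, S y /\ ~ lt y x) -> inj_le X {y : X | S y}.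

(* A set of regular cardinals is given by an index type I and, for each
   a : I, a regular cardinal (T a, ltT a); f \in prod A is f : forall a, T a. *)

Definition idx_lt (I : Type) (T : I -> Type) (i j : I) : Prop :=
  inj_le (T i) (T j) /\ ~ inj_le (T j) (T i).

(* X is in J_bd: sup X < sup A, i.e. X is contained in {a in A | a < b} for some b in A *)
Definition bounded_in (I : Type) (T : I -> Type) (X : I -> Prop) : Prop :=
  exists b : I, forall i, X i -> idx_lt T i b.

Definition in_spec (J : Type) (S : J -> Type) (ltS : forall j, S j -> S j -> Prop)
  (K : Type) (ltK : K -> K -> Prop) : Prop :=
  is_regular ltK /\
  exists phi : K -> (forall j, S j),
    injective_map phi /\
    forall X : K -> Prop, inj_le K {x : K | X x} ->
      ~ exists g : (forall j, S j), forall x, X x -> forall j, ltS j (phi x j) (g j).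

Definition ub (I : Type) (T : I -> Type) (ltT : forall i, T i -> T i -> Prop)
  (K : Type) (phi : K -> forall i, T i) (X : K -> Prop) (i : I) : Prop :=
  ~ exists beta : T i, forall x, X x -> ltT i (phi x i) beta.

Definition in_spec_star (I : Type) (T : I -> Type) (ltT : forall i, T i -> T i -> Prop)
  (K : Type) (ltK : K -> K -> Prop) : Prop :=
  is_regular ltK /\
  exists phi : K -> (forall i, T i),
    injective_map phi /\
    forall X : K -> Prop, inj_le K {x : K | X x} ->
      ~ bounded_in T (@ub I T ltT K phi X).

Definition le_cf_bd (I : Type) (T : I -> Type) (ltT : forall i, T i -> T i -> Prop)
  (K : Type) : Prop :=
  forall C : (forall i, T i) -> Prop,
    (forall h : (forall i, T i), exists f, C f /\
        bounded_in T (fun i => ~ ltT i (h i) (f i))) ->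
    inj_le K {f : (forall i, T i) | C f}.

Definition proper_initial_segment (I : Type) (T : I -> Type) (B : I -> Prop) : Prop :=
  (forall i j, B j -> inj_le (T i) (T j) -> B i) /\ exists i, ~ B i.

(* Let phi : lambda -> prod A and let C be cofinal in prod A / J_bd with |C| < lambda.  As lambda
   is regular, lambda many phi y lie below a single f in C modulo J_bd.  Cofinality makes C
   unbounded at every a from some a0 on, so each such a has |a| <= |C| < lambda; as distinct
   cardinals below lambda they are fewer than lambda, and a second pigeonhole gives b and lambda
   many phi y below f at every a >= b.  Restricted to the initial segment below b these phi y
   witness lambda in spec (after passing to an injective subfamily), and for spec^* they bound ub
   by b. *)

From Stdlib Require Import ClassicalEpsilon ProofIrrelevance FunctionalExtensionality Wellfounded.

Lemma dependent_functional_choice {A : Type} {B : A -> Type} (R : forall x, B x -> Prop) :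
  (forall x, exists y, R x y) -> exists f : forall x, B x, forall x, R x (f x).
Proof.
  intros H. exists (fun x => proj1_sig (constructive_indefinite_description _ (H x))).
  intros x. exact (proj2_sig (constructive_indefinite_description _ (H x))).
Qed.

Lemma proj1_sig_inj {X : Type} {P : X -> Prop} (a b : {x | P x}) :
  proj1_sig a = proj1_sig b -> a = b.
Proof. destruct a, b; simpl. apply subset_eq_compat. Qed.

Lemma inj_le_trans {X Y Z : Type} : inj_le X Y -> inj_le Y Z -> inj_le X Z.
Proof.
  intros [f Hf] [g Hg]. exists (fun x => g (f x)).
  intros x y E. exact (Hf _ _ (Hg _ _ E)).
Qed.

Lemma inj_le_full (X : Type) : inj_le X {x : X | True}.
Proof. exists (fun x => exist _ x I). intros x y E. exact (f_equal (@proj1_sig _ _) E). Qed.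

Lemma inj_le_subset {X : Type} {P Q : X -> Prop} :
  (forall x, P x -> Q x) -> inj_le {x | P x} {x | Q x}.
Proof.
  intros H. exists (fun x => exist Q (proj1_sig x) (H _ (proj2_sig x))).
  intros x y E. apply proj1_sig_inj. exact (f_equal (@proj1_sig _ _) E).
Qed.

Lemma inj_le_range {K X : Type} (g : K -> X) : inj_le {x | exists k, g k = x} K.
Proof.
  destruct (dependent_functional_choice (fun (x : {x | exists k, g k = x}) k => g k = proj1_sig x)
              (fun x => proj2_sig x)) as [pre Hpre].
  exists pre. intros x y E. apply proj1_sig_inj. rewrite <- Hpre, <- (Hpre y), E. reflexivity.
Qed.

Lemma inj_le_image {X Y : Type} {u : X -> Y} (Hu : injective_map u) (P : X -> Prop) :
  inj_le {x | P x} {y | exists x, P x /\ u x = y}.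
Proof.
  exists (fun x => exist _ (u (proj1_sig x))
                    (ex_intro _ (proj1_sig x) (conj (proj2_sig x) eq_refl))).
  intros x y E. apply proj1_sig_inj, Hu. exact (f_equal (@proj1_sig _ _) E).
Qed.

Lemma well_founded_irrefl {X : Type} {lt : X -> X -> Prop} :
  well_founded lt -> forall x, ~ lt x x.
Proof. intros Hwf x. induction (Hwf x) as [x _ IH]. intros H. exact (IH x H H). Qed.

Lemma well_founded_minimal {X : Type} {lt : X -> X -> Prop} (P : X -> Prop) :
  well_founded lt -> (exists x, P x) -> exists x, P x /\ forall y, lt y x -> ~ P y.
Proof.
  intros Hwf [x Px]. induction (Hwf x) as [x _ IH].
  destruct (classic (exists y, lt y x /\ P y)) as [[y [Hy Py]] | Hmin].
  - exact (IH y Hy Py).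
  - exists x. split; [exact Px|]. intros y Hy Py. apply Hmin. eauto.
Qed.

Section Comparability.

Context {X : Type} {lt : X -> X -> Prop} (Hwo : well_order lt) (Y : Type).

Definition greedy_step (x : X) (g : forall z, lt z x -> option Y) : option Y :=
  match excluded_middle_informative (exists y, forall z (h : lt z x), g z h <> Some y) with
  | left H => Some (proj1_sig (constructive_indefinite_description _ H))
  | right _ => None
  end.

Definition greedy : X -> option Y := Fix (proj1 Hwo) (fun _ => option Y) greedy_step.

Lemma greedy_eq x : greedy x = greedy_step x (fun z _ => greedy z).
Proof.
  apply (Fix_eq (proj1 Hwo) (fun _ => option Y) greedy_step).
  intros x' g g' Hg. replace g' with g; [reflexivity|].
  apply functional_extensionality_dep; intros z. apply functional_extensionality_dep; intros h.
  apply Hg.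
Qed.

Lemma greedy_fresh x y : greedy x = Some y -> forall z, lt z x -> greedy z <> Some y.
Proof.
  rewrite greedy_eq. unfold greedy_step.
  destruct excluded_middle_informative as [H | _]; [|discriminate].
  intros E. injection E as E. subst y. exact (proj2_sig (constructive_indefinite_description _ H)).
Qed.

Lemma greedy_exhausted x : greedy x = None -> forall y, exists z, lt z x /\ greedy z = Some y.
Proof.
  rewrite greedy_eq. unfold greedy_step.
  destruct excluded_middle_informative as [H | H]; [discriminate|].
  intros _ y. apply NNPP. intros Hy. apply H. exists y. intros z h E. apply Hy. eauto.
Qed.

Lemma well_order_comparable : inj_le X Y \/ exists x0, inj_le Y {z | lt z x0}.
Proof.
  destruct Hwo as [_ [_ Htri]].
  destruct (classic (forall x, exists y, greedy x = Some y)) as [Htotal | Hpartial].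
  - left. destruct (dependent_functional_choice _ Htotal) as [e He].
    exists e. intros a b E.
    destruct (Htri a b) as [Hab | [Hab | Hab]]; [exfalso | exact Hab | exfalso].
    + apply (greedy_fresh b (e b) (He b) a Hab). rewrite <- E. apply He.
    + apply (greedy_fresh a (e a) (He a) b Hab). rewrite E. apply He.
  - right. apply not_all_ex_not in Hpartial as [x0 Hx0].
    assert (Hnone : greedy x0 = None).
    { destruct (greedy x0) as [y|]; [exfalso; eauto | reflexivity]. }
    destruct (dependent_functional_choice
                (fun y (z : {z | lt z x0}) => greedy (proj1_sig z) = Some y))
      as [d Hd].
    { intros y. destruct (greedy_exhausted x0 Hnone y) as [z [Hz E]].
      exists (exist _ z Hz). exact E. }
    exists x0, d. intros a b E.
    assert (Hab : Some a = Some b) by (rewrite <- Hd, <- (Hd b), E; reflexivity).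
    injection Hab as Hab. exact Hab.
Qed.

End Comparability.

Lemma well_order_sub {X : Type} {lt : X -> X -> Prop} (P : X -> Prop) :
  well_order lt -> well_order (fun a b : {x | P x} => lt (proj1_sig a) (proj1_sig b)).
Proof.
  intros [Hwf [Htr Htri]]. split; [|split].
  - exact (wf_inverse_image _ _ lt (@proj1_sig _ _) Hwf).
  - intros a b c. apply Htr.
  - intros a b. destruct (Htri (proj1_sig a) (proj1_sig b)) as [H | [H | H]]; auto.
    right; left. exact (proj1_sig_inj _ _ H).
Qed.

Lemma well_order_comparable_below {X : Type} {lt : X -> X -> Prop} (Hwo : well_order lt)
  (m : X) (Y : Type) :
  inj_le {z | lt z m} Y \/ exists x0, lt x0 m /\ inj_le Y {z | lt z x0}.
Proof.
  destruct (well_order_comparable (well_order_sub (fun z => lt z m) Hwo) Y) as [H | [x0 H]].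
  - left. exact H.
  - right. exists (proj1_sig x0). split; [exact (proj2_sig x0)|].
    apply (inj_le_trans H).
    exists (fun w => exist (fun z => lt z (proj1_sig x0)) (proj1_sig (proj1_sig w)) (proj2_sig w)).
    intros a b E. apply proj1_sig_inj, proj1_sig_inj. exact (f_equal (@proj1_sig _ _) E).
Qed.

Section Regular.

Context {X : Type} {lt : X -> X -> Prop} (Hr : is_regular lt).

Lemma regular_bounded_of_small (P : X -> Prop) :
  ~ inj_le X {x | P x} -> exists b, forall x, P x -> lt x b.
Proof.
  intros Hsmall. destruct Hr as [_ [_ Hcof]].
  apply NNPP. intros Hunb. apply Hsmall, Hcof. intros b.
  apply NNPP. intros Hb. apply Hunb. exists b. intros x Px.
  apply NNPP. intros Hx. apply Hb. eauto.
Qed.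

Lemma regular_bounded_range {K : Type} (g : K -> X) :
  ~ inj_le X K -> exists b, forall k, lt (g k) b.
Proof.
  intros HK. destruct (regular_bounded_of_small (fun x => exists k, g k = x)) as [b Hb].
  - intros H. exact (HK (inj_le_trans H (inj_le_range g))).
  - exists b. intros k. apply Hb. eauto.
Qed.

Lemma regular_pigeonhole {K : Type} {P : X -> Prop} {R : X -> K -> Prop} :
  inj_le X {x | P x} -> ~ inj_le X K -> (forall x, P x -> exists k, R x k) ->
  exists k, inj_le X {x | P x /\ R x k}.
Proof.
  intros HP HK Hcover. apply NNPP. intros Hfibers.
  destruct (dependent_functional_choice (fun k b => forall x, P x /\ R x k -> lt x b))
    as [bound Hbound].
  { intros k. apply regular_bounded_of_small. intros H. eauto. }
  destruct (regular_bounded_range bound HK) as [b Hb].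
  destruct Hr as [[[_ [Htr _]] Hcard] _].
  apply (Hcard b), (inj_le_trans HP), inj_le_subset.
  intros x Px. destruct (Hcover x Px) as [k Hk]. exact (Htr _ _ _ (Hbound k x (conj Px Hk)) (Hb k)).
Qed.

Lemma regular_no_max (x : X) : exists y, lt x y.
Proof.
  destruct Hr as [_ [[n Hn] Hcof]]. apply NNPP. intros Hmax.
  destruct (Hcof (fun y => y = x)) as [u Hu].
  { intros z. exists x. split; [reflexivity|]. intros H. apply Hmax. eauto. }
  assert (E : u (n 0) = u (n 1)).
  { apply proj1_sig_inj. rewrite (proj2_sig (u (n 0))), (proj2_sig (u (n 1))). reflexivity. }
  discriminate (Hn _ _ (Hu _ _ E)).
Qed.

End Regular.

Section SpecFamilies.

Context {J : Type} {S : J -> Type} (ltS : forall j, S j -> S j -> Prop) {K : Type}.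

Definition pointwise_bounded (psi : K -> forall j, S j) (X : K -> Prop) : Prop :=
  exists g : forall j, S j, forall x, X x -> forall j, ltS j (psi x j) (g j).

Definition spec_family (psi : K -> forall j, S j) : Prop :=
  forall X : K -> Prop, inj_le K {x | X x} -> ~ pointwise_bounded psi X.

Lemma spec_family_comp (psi : K -> forall j, S j) (u : K -> K) :
  injective_map u -> spec_family psi -> spec_family (fun k => psi (u k)).
Proof.
  intros Hu Hpsi X HX [g Hg].
  apply (Hpsi _ (inj_le_trans HX (inj_le_image Hu X))).
  exists g. intros y [x [Hx <-]]. exact (Hg x Hx).
Qed.

(* Each fibre of psi is bounded by a successor of its value, hence small; so the range of psi has
   full size, and psi composed with a section over its range is injective. *)
Lemma spec_family_injective (HS : forall j, is_regular (ltS j))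
  (ltK : K -> K -> Prop) (HK : is_regular ltK) (psi : K -> forall j, S j) :
  spec_family psi -> exists psi', injective_map psi' /\ spec_family psi'.
Proof.
  intros Hpsi.
  assert (Hfiber : forall v, ~ inj_le K {x | psi x = v}).
  { intros v Hv. apply (Hpsi _ Hv).
    destruct (dependent_functional_choice _ (fun j => regular_no_max (HS j) (v j))) as [g Hg].
    exists g. intros x <- j. apply Hg. }
  assert (Hrange : inj_le K {v | exists x, psi x = v}).
  { apply NNPP. intros Hsmall.
    destruct (regular_pigeonhole HK
                (R := fun x (v : {v | exists x, psi x = v}) => psi x = proj1_sig v)
                (inj_le_full K) Hsmall) as [v Hv].
    { intros x _. exists (exist _ (psi x) (ex_intro _ x eq_refl)). reflexivity. }
    exact (Hfiber _ (inj_le_trans Hv (inj_le_subset (fun x H => proj2 H)))). }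
  destruct Hrange as [s Hs].
  destruct (dependent_functional_choice
              (fun (v : {v | exists x, psi x = v}) x => psi x = proj1_sig v)
              (fun v => proj2_sig v)) as [pre Hpre].
  assert (Hinj : injective_map (fun k => psi (pre (s k)))).
  { intros a b E. apply Hs, proj1_sig_inj. rewrite <- Hpre, <- (Hpre (s b)). exact E. }
  exists (fun k => psi (pre (s k))). split; [exact Hinj|].
  apply spec_family_comp; [|exact Hpsi].
  intros a b E. apply Hinj. simpl. rewrite E. reflexivity.
Qed.

End SpecFamilies.

Lemma spec_family_restrict {I : Type} {T : I -> Type} (ltT : forall i, T i -> T i -> Prop)
  {K : Type} (B : I -> Prop) (phi : K -> forall i, T i) (F : forall i, T i) :
  spec_family ltT phi -> (forall k i, ~ B i -> ltT i (phi k i) (F i)) ->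
  spec_family (fun j : {i | B i} => ltT (proj1_sig j)) (fun k j => phi k (proj1_sig j)).
Proof.
  intros Hphi HF X HX [g Hg]. apply (Hphi X HX).
  exists (fun i => match excluded_middle_informative (B i) with
                   | left h => g (exist B i h)
                   | right _ => F i
                   end).
  intros x Hx i. destruct excluded_middle_informative as [h | h].
  - exact (Hg x Hx (exist B i h)).
  - exact (HF x i h).
Qed.

Section BoundedIdeal.

Context {I : Type} (T : I -> Type) (ltT : forall i, T i -> T i -> Prop).

Definition lt_mod_bd (h f : forall i, T i) : Prop :=
  bounded_in T (fun i => ~ ltT i (h i) (f i)).

Definition lt_above (b : I) (h f : forall i, T i) : Prop :=
  forall i, ~ idx_lt T i b -> ltT i (h i) (f i).

Definition cofinal_mod_bd (C : (forall i, T i) -> Prop) : Prop :=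
  forall h, exists f, C f /\ lt_mod_bd h f.

Lemma idx_lt_irrefl i : ~ idx_lt T i i.
Proof. intros [H Hn]. exact (Hn H). Qed.

Lemma idx_lt_trans i j k : idx_lt T i j -> idx_lt T j k -> idx_lt T i k.
Proof.
  intros [Hij Hji] [Hjk Hkj]. split; [exact (inj_le_trans Hij Hjk)|].
  intros Hki. exact (Hkj (inj_le_trans Hki Hij)).
Qed.

Lemma initial_segment_below b : proper_initial_segment T (fun i => idx_lt T i b).
Proof.
  split.
  - intros i j [Hjb Hbj] Hij. split; [exact (inj_le_trans Hij Hjb)|].
    intros Hbi. exact (Hbj (inj_le_trans Hbi Hij)).
  - exists b. apply idx_lt_irrefl.
Qed.

Lemma lt_mod_bd_above h f b0 :
  lt_mod_bd h f -> exists b, ~ idx_lt T b b0 /\ lt_above b h f.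
Proof.
  intros [b Hb]. destruct (classic (idx_lt T b b0)) as [Hbb0 | Hbb0].
  - exists b0. split; [apply idx_lt_irrefl|]. intros i Hi.
    apply NNPP. intros Hlt. exact (Hi (idx_lt_trans _ _ _ (Hb i Hlt) Hbb0)).
  - exists b. split; [exact Hbb0|]. intros i Hi.
    apply NNPP. intros Hlt. exact (Hi (Hb i Hlt)).
Qed.

Lemma small_cofinal_of_not_le_cf_bd (L : Type) :
  ~ le_cf_bd T ltT L -> exists C, cofinal_mod_bd C /\ ~ inj_le L {f | C f}.
Proof.
  intros H. apply not_all_ex_not in H as [C HC]. apply imply_to_and in HC. eauto.
Qed.

Hypothesis HA : forall i, is_regular (ltT i).

(* Apply cofinality to the pointwise supremum of C, where it exists: beyond the bound, the member
   of C above it witnesses that C is unbounded. *)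
Lemma cofinal_unbounded_above C :
  cofinal_mod_bd C ->
  exists b0, forall i, ~ idx_lt T i b0 -> ~ exists beta, forall f, C f -> ltT i (f i) beta.
Proof.
  intros HC.
  destruct (dependent_functional_choice
              (fun i beta => (exists beta', forall f, C f -> ltT i (f i) beta') ->
                             forall f, C f -> ltT i (f i) beta)) as [sup Hsup].
  { intros i. destruct (classic (exists beta', forall f, C f -> ltT i (f i) beta'))
      as [[beta Hbeta] | Hunb].
    - exists beta. intros _. exact Hbeta.
    - destruct (HA i) as [_ [[n _] _]]. exists (n 0). intros H. contradiction. }
  destruct (HC sup) as [f [Cf [b0 Hb0]]].
  exists b0. intros i Hi Hbd.
  assert (Hsupf : ltT i (sup i) (f i)) by (apply NNPP; intros H; exact (Hi (Hb0 i H))).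
  destruct (HA i) as [[[Hwf [Htr _]] _] _].
  exact (well_founded_irrefl Hwf (f i) (Htr _ _ _ (Hsup i Hbd f Cf) Hsupf)).
Qed.

Hypothesis Hset : forall i j, inj_le (T i) (T j) -> inj_le (T j) (T i) -> i = j.

Context {L : Type} {ltL : L -> L -> Prop} (HL : is_regular ltL).

(* Each T i is sent to the least l with |T i| <= |l|; this is injective since A has no two
   equipotent members. *)
Lemma few_cardinals_below (P : I -> Prop) (l0 : L) :
  (forall i, P i -> inj_le (T i) {z | ltL z l0}) -> ~ inj_le L {i | P i}.
Proof.
  intros Hbelow [u Hu].
  destruct HL as [[Hwo Hcard] _]. pose proof Hwo as [Hwf [Htr Htri]].
  destruct (dependent_functional_choice
              (fun (i : {i | P i}) l => inj_le (T (proj1_sig i)) {z | ltL z l} /\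
                 forall z, ltL z l -> ~ inj_le (T (proj1_sig i)) {w | ltL w z}))
    as [rank Hrank].
  { intros i. apply (well_founded_minimal _ Hwf). exists l0. exact (Hbelow _ (proj2_sig i)). }
  assert (Hrank_ge : forall i, inj_le {z | ltL z (rank i)} (T (proj1_sig i))).
  { intros i. destruct (well_order_comparable_below Hwo (rank i) (T (proj1_sig i)))
      as [H | [z [Hz H]]]; [exact H|].
    exfalso. exact (proj2 (Hrank i) z Hz H). }
  assert (Hrank_inj : injective_map rank).
  { intros i j E. apply proj1_sig_inj, Hset.
    - apply (inj_le_trans (proj1 (Hrank i))). rewrite E. apply Hrank_ge.
    - apply (inj_le_trans (proj1 (Hrank j))). rewrite <- E. apply Hrank_ge. }
  destruct (regular_no_max HL l0) as [l1 Hl1].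
  assert (Hrank_lt : forall i, ltL (rank i) l1).
  { intros i. destruct (Htri (rank i) l0) as [H | [H | H]].
    - exact (Htr _ _ _ H Hl1).
    - rewrite H. exact Hl1.
    - exfalso. exact (proj2 (Hrank i) l0 H (Hbelow _ (proj2_sig i))). }
  apply (Hcard l1).
  exists (fun x => exist (fun z => ltL z l1) (rank (u x)) (Hrank_lt (u x))).
  intros x y E. apply Hu, Hrank_inj. exact (f_equal (@proj1_sig _ _) E).
Qed.

Lemma small_cofinal_few_indices_above C :
  cofinal_mod_bd C -> ~ inj_le L {f | C f} ->
  exists b0, ~ inj_le L {i | ~ idx_lt T i b0}.
Proof.
  intros HC HCs.
  destruct (well_order_comparable (proj1 (proj1 HL)) {f | C f}) as [H | [lC HlC]];
    [contradiction|].
  destruct (cofinal_unbounded_above C HC) as [b0 Hb0].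
  exists b0. apply (few_cardinals_below _ lC). intros i Hi.
  apply (fun H => inj_le_trans H HlC). apply NNPP. intros Hsmall.
  destruct (regular_bounded_range (HA i) (fun f : {f | C f} => proj1_sig f i) Hsmall)
    as [beta Hbeta].
  apply (Hb0 i Hi). exists beta. intros f Cf. exact (Hbeta (exist _ f Cf)).
Qed.

Lemma small_cofinal_bounds_above C (phi : L -> forall i, T i) :
  cofinal_mod_bd C -> ~ inj_le L {f | C f} ->
  exists b F, inj_le L {y | lt_above b (phi y) F}.
Proof.
  intros HC HCs.
  destruct (regular_pigeonhole HL
              (R := fun x (f : {f | C f}) => lt_mod_bd (phi x) (proj1_sig f))
              (inj_le_full L) HCs) as [f Hf].
  { intros x _. destruct (HC (phi x)) as [f [Cf Hf]]. exists (exist _ f Cf). exact Hf. }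
  destruct (small_cofinal_few_indices_above C HC HCs) as [b0 Hb0].
  destruct (regular_pigeonhole HL
              (R := fun x (b : {i | ~ idx_lt T i b0}) =>
                      lt_above (proj1_sig b) (phi x) (proj1_sig f))
              Hf Hb0) as [b Hb].
  { intros x [_ Hx]. destruct (lt_mod_bd_above _ _ b0 Hx) as [b [Hbb0 Hb]].
    exists (exist _ b Hbb0). exact Hb. }
  exists (proj1_sig b), (proj1_sig f).
  exact (inj_le_trans Hb (inj_le_subset (fun x H => proj2 H))).
Qed.

End BoundedIdeal.

Theorem proposition5p11
  (I : Type) (T : I -> Type) (ltT : forall i, T i -> T i -> Prop)
  (HA : forall i, @is_regular (T i) (ltT i))
  (Hset : forall i j, inj_le (T i) (T j) -> inj_le (T j) (T i) -> i = j)
  (L : Type) (ltL : L -> L -> Prop) :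
  (@in_spec I T ltT L ltL ->
     @le_cf_bd I T ltT L \/
     exists B : I -> Prop, @proper_initial_segment I T B /\
       @in_spec {i : I | B i} (fun j => T (proj1_sig j))
                (fun j => ltT (proj1_sig j)) L ltL) /\
  (@in_spec_star I T ltT L ltL -> @le_cf_bd I T ltT L).
Proof.
  split; intros [HL [phi [_ Hphi]]].
  - destruct (classic (le_cf_bd T ltT L)) as [Hcf | Hcf]; [left; exact Hcf | right].
    destruct (small_cofinal_of_not_le_cf_bd T ltT L Hcf) as [C [HC HCs]].
    destruct (small_cofinal_bounds_above T ltT HA Hset HL C phi HC HCs) as [b [F [e He]]].
    exists (fun i => idx_lt T i b). split; [apply initial_segment_below|].
    split; [exact HL|].
    apply (spec_family_injective _ (fun j => HA (proj1_sig j)) ltL HL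
             (fun l j => phi (proj1_sig (e l)) (proj1_sig j))).
    apply (spec_family_restrict ltT (fun i => idx_lt T i b) (fun l => phi (proj1_sig (e l))) F).
    + apply (spec_family_comp ltT phi (fun l => proj1_sig (e l))); [|exact Hphi].
      intros x y E. apply He, proj1_sig_inj, E.
    + intros l. exact (proj2_sig (e l)).
  - apply NNPP. intros Hcf.
    destruct (small_cofinal_of_not_le_cf_bd T ltT L Hcf) as [C [HC HCs]].
    destruct (small_cofinal_bounds_above T ltT HA Hset HL C phi HC HCs) as [b [F HY]].
    apply (Hphi _ HY). exists b. intros i Hub.
    apply NNPP. intros Hi. apply Hub. exists (F i). intros x Hx. exact (Hx i Hi).
Qed.
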